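(* Let $X$ be the space of all sequences of the form $c=\sum_{k=1}^N a_k\star b_k$ (finite sums) with $a_k,b_k$ finitely supported sequences, normed by $\|c\|_X=\inf\sum_{k=1}^N\|a_k\|_{\ell^2(\mathbb{N})}\|b_k\|_{\ell^2(\mathbb{N})}$ over all such finite representations, and let $\mathcal{X}$ be its Banach space completion. For $m=M(\alpha)\in\mathcal{M}$ let $Jm(c)=(\alpha,c)$, $c\in X$. Then $Jm$ extends to a bounded linear functional on $\mathcal{X}$ for every $m\in\mathcal{M}$, and $J\colon\mathcal{M}\to\mathcal{X}^*$ is an isometric isomorphism.
   Context: For a sequence $\alpha\colon\mathbb{N}\to\mathbb{C}$, $M(\alpha)$ is defined by $\langle M(\alpha)a,b\rangle_{\ell^2(\mathbb{N})}=\sum_{n,m}a(n)\overline{b(m)}\alpha(nm)$ for finitely supported $a,b$; $\mathcal{M}$ is the space of those $M(\alpha)$ extending to bounded operators on $\ell^2(\mathbb{N})$, with the operator norm. Dirichlet convolution: $(a\star b)(n)=\sum_{k\mid n}a(k)\overline{b(n/k)}$; $(a,b)=\sum_n a(n)b(n)$ is the bilinear pairing. *)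

From HB Require Import structures.
From mathcomp Require Import all_boot all_order all_algebra.
From mathcomp Require Import all_classical all_reals all_analysis.
From mathcomp Require Import complex.
Set Implicit Arguments.
Unset Strict Implicit.
Unset Printing Implicit Defensive.
Import Order.TTheory GRing.Theory Num.Theory.
Local Open Scope ring_scope.
Local Open Scope complex_scope.

Section Defs.
Variable R : realType.
Local Notation C := R[i].

(* Sequences indexed by N = {1,2,...}; we use nat -> C and ignore index 0
   (finitely supported sequences are required to vanish at 0). *)

Definition supp_le (N : nat) (a : nat -> C) : Prop :=
  forall n : nat, ((n == 0%N) || (N < n)%N) -> a n = 0.

Definition finsupp (a : nat -> C) : Prop := exists N, supp_le N a.

Definition l2N (N : nat) (a : nat -> C) : R :=
  Num.sqrt (\sum_(1 <= n < N.+1) complex.Re (`|a n| ^+ 2)).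

Definition dconv (a b : nat -> C) : nat -> C :=
  fun n => \sum_(1 <= k < n.+1 | (k %| n)%N) a k * (b (n %/ k)%N)^*.

Definition rep (c : nat -> C) (N : nat) (s : seq ((nat -> C) * (nat -> C))) : Prop :=
  (forall p, p \in s -> supp_le N p.1 /\ supp_le N p.2) /\
  (forall n, c n = \sum_(p <- s) dconv p.1 p.2 n).

Definition inX (c : nat -> C) : Prop := exists N s, rep c N s.

Definition normX (c : nat -> C) : R :=
  inf [set r : R | exists N s, rep c N s /\
         r = \sum_(p <- s) l2N N p.1 * l2N N p.2].

Definition pairN (N : nat) (alpha c : nat -> C) : C :=
  \sum_(1 <= n < N.+1) alpha n * c n.

(* <M(alpha) a, b> for a, b supported in {1,...,N} *)
Definition Mform (alpha : nat -> C) (N : nat) (a b : nat -> C) : C :=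
  \sum_(1 <= n < N.+1) \sum_(1 <= m < N.+1) a n * (b m)^* * alpha (n * m)%N.

(* K bounds the sesquilinear form of M(alpha) on finitely supported vectors,
   i.e. M(alpha) extends to a bounded operator on l^2 of norm <= K *)
Definition Mbound (alpha : nat -> C) (K : R) : Prop :=
  forall N a b, supp_le N a -> supp_le N b ->
    `|Mform alpha N a b| <= (K * l2N N a * l2N N b)%:C.

Definition inM (alpha : nat -> C) : Prop := exists K : R, Mbound alpha K.

Definition Mnorm (alpha : nat -> C) : R :=
  inf [set K : R | 0 <= K /\ Mbound alpha K].

Definition is_completion (Y : completeNormedModType C) (iota : (nat -> C) -> Y)
  : Prop :=
  (forall c d, inX c -> inX d -> iota (c \+ d) = iota c + iota d) /\
  (forall (l : C) c, inX c -> iota (fun n => l * c n) = l *: iota c) /\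
  (forall c, inX c -> `|iota c| = (normX c)%:C) /\
  (forall (y : Y) (e : R), 0 < e -> exists c, inX c /\ `|y - iota c| < e%:C).

Definition bdd_functional (Y : normedModType C) (phi : Y -> C) : Prop :=
  (forall x y : Y, phi (x + y) = phi x + phi y) /\
  (forall (l : C) (x : Y), phi (l *: x) = l * phi x) /\
  (exists K : R, forall x : Y, `|phi x| <= K%:C * `|x|).

Definition dual_norm (Y : normedModType C) (phi : Y -> C) : R :=
  inf [set K : R | 0 <= K /\ forall x : Y, `|phi x| <= K%:C * `|x|].

End Defs.

From HB Require Import structures.
From mathcomp Require Import all_boot all_order all_algebra.
From mathcomp Require Import all_classical all_reals all_analysis.
From mathcomp Require Import complex.
From mathcomp Require Import lra.
Import Order.TTheory GRing.Theory Num.Theory.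
Local Open Scope ring_scope.
Set Implicit Arguments.
Unset Strict Implicit.
Unset Printing Implicit Defensive.

(* Pairing with alpha turns a convolution a * b into the form <M(alpha) a, b>.
   So a bound K for M(alpha) gives |(alpha, c)| <= K sum_k ||a_k|| ||b_k|| for
   every representation of c, that is |(alpha, c)| <= K ||c||_X; conversely a
   functional bounded by K on X, evaluated at c = a * b, bounds the form of
   M(alpha) by K ||a|| ||b||.  Hence the norms agree once J m is extended to the
   completion.  The extension needs no limits: the real and imaginary parts of
   McShane's extension y |-> sup_c ((alpha, c) - K ||y - c||) give a value phi y
   with |phi y - (alpha, c)| <= 2K ||y - c|| for all c in X, and by density such
   a value is unique, which forces linearity and uniqueness of the extension.
   Finally every bounded phi is J of alpha n = phi (delta n): a finitely
   supported c equals c * delta 1, so X contains all of them and phi is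
   determined by its values at the delta n. *)

Section RealBounds.
Variable R : realType.

Lemma ler_addgt0_scaled (x a M : R) : 0 <= M ->
  (forall e, 0 < e -> x <= a + M * e) -> x <= a.
Proof.
move=> M0 h; apply/ler_addgt0Pr => e e0.
have M1 : 0 < M + 1 by lra.
apply: le_trans (h (e / (M + 1)) _) _; first exact: divr_gt0.
rewrite lerD2l mulrA ler_pdivrMr // mulrC ler_wpM2l; lra.
Qed.

Lemma ler_pM_inf (E : set R) (K x : R) : 0 <= K -> has_inf E ->
  (forall r, E r -> x <= K * r) -> x <= K * inf E.
Proof.
move=> K0 infE xE; apply: (ler_addgt0_scaled K0) => e e0.
have [r Er r_lt] := inf_adherent e0 infE.
by apply: le_trans (xE r Er) _; rewrite -mulrDr ler_wpM2l // ltW.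
Qed.

End RealBounds.

Section BigNat.
Variable V : nmodType.
Implicit Type F : nat -> V.

Lemma big_nat_eq1 F i lo hi :
  \sum_(lo <= m < hi) (if m == i then F m else 0) =
  if (lo <= i < hi)%N then F i else 0.
Proof. by rewrite -big_mkcond big_nat1_eq. Qed.

Lemma big_nat_widen0 F lo n1 n2 : (lo <= n1 <= n2)%N ->
  (forall k, (n1 <= k < n2)%N -> F k = 0) ->
  \sum_(lo <= k < n2) F k = \sum_(lo <= k < n1) F k.
Proof.
move=> /andP[lo_n1 n12] F0; rewrite (big_cat_nat lo_n1 n12) /=.
rewrite [X in _ + X]big_nat_cond [X in _ + X]big1 ?addr0 // => k.
by case/andP=> /F0.
Qed.

End BigNat.

Section RealNorm.
Variable R : realType.
Local Notation C := R[i].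
Local Open Scope complex_scope.

Definition normR (V : normedZmodType C) (v : V) : R := complex.Re `|v|.

Lemma normRE (V : normedZmodType C) (v : V) : `|v| = (normR v)%:C.
Proof. by rewrite /normR RRe_real // normr_real. Qed.

Lemma lec_normR (U V : normedZmodType C) (u : U) (v : V) (K : R) :
  (`|u| <= K%:C * `|v|) = (normR u <= K * normR v).
Proof. by rewrite !normRE -rmorphM lecR. Qed.

Section Normed.
Variable V : normedZmodType C.
Implicit Types u v w : V.

Lemma normR_ge0 v : 0 <= normR v.
Proof. by rewrite -ler0c -normRE. Qed.

Lemma normRD u v : normR (u + v) <= normR u + normR v.
Proof. by rewrite -lecR rmorphD /= -!normRE ler_normD. Qed.

Lemma normRN v : normR (- v) = normR v.
Proof. by rewrite /normR normrN. Qed.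

Lemma distRC u v : normR (u - v) = normR (v - u).
Proof. by rewrite -normRN opprB. Qed.

Lemma distR_triangle u v w : normR (u - w) <= normR (u - v) + normR (v - w).
Proof.
have -> : u - w = (u - v) + (v - w) by rewrite addrA subrK.
exact: normRD.
Qed.

Lemma normR_eq0 v : normR v = 0 -> v = 0.
Proof. by move=> v0; apply/eqP; rewrite -normr_eq0 normRE v0. Qed.

End Normed.

Lemma normRZ (V : normedModType C) (l : C) (v : V) :
  normR (l *: v) = normR l * normR v.
Proof. by apply: complexI; rewrite rmorphM /= -!normRE normrZ. Qed.

Lemma normRM (x y : C) : normR (x * y) = normR x * normR y.
Proof. by apply: complexI; rewrite rmorphM /= -!normRE normrM. Qed.

Lemma normR_Re_le (w : C) : `|complex.Re w| <= normR w.
Proof.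
rewrite /normR normc_def /= -sqrtr_sqr; apply: ler_wsqrtr.
by rewrite lerDl sqr_ge0.
Qed.

Lemma normR_Im_le (w : C) : `|complex.Im w| <= normR w.
Proof.
rewrite /normR normc_def /= -sqrtr_sqr; apply: ler_wsqrtr.
by rewrite lerDr sqr_ge0.
Qed.

Lemma normR_le_ReIm (w : C) : normR w <= `|complex.Re w| + `|complex.Im w|.
Proof.
rewrite /normR normc_def /= -[X in _ <= X]ger0_norm ?addr_ge0 //.
rewrite -sqrtr_sqr; apply: ler_wsqrtr.
rewrite sqrrD !real_normK ?num_real // -addrA lerD2l lerDr.
by rewrite mulrn_wge0 // mulr_ge0.
Qed.

End RealNorm.

Section Sequences.
Variable R : realType.
Local Notation C := R[i].
Local Open Scope complex_scope.
Implicit Types (a b c d : nat -> C) (alpha : nat -> C).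

Lemma supp_leW N M c : (N <= M)%N -> supp_le N c -> supp_le M c.
Proof.
move=> NM cN n /orP[/eqP->|Mn]; first by apply: cN; rewrite eqxx.
by apply: cN; rewrite (leq_ltn_trans NM Mn) orbT.
Qed.

Lemma supp_leB N c d : supp_le N c -> supp_le N d -> supp_le N (c \- d).
Proof. by move=> cN dN n nN /=; rewrite cN ?dN ?subr0. Qed.

Lemma supp_leZ N l c : supp_le N c -> supp_le N (fun n => l * c n).
Proof. by move=> cN n nN; rewrite cN ?mulr0. Qed.

Lemma pairN_widen N M alpha c : (N <= M)%N -> supp_le N c ->
  pairN M alpha c = pairN N alpha c.
Proof.
move=> NM cN; rewrite /pairN (@big_nat_widen0 _ _ 1 N.+1 M.+1) //.
by move=> k /andP[Nk _]; rewrite cN ?mulr0 // Nk orbT.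
Qed.

Lemma pairND N alpha c d :
  pairN N alpha (c \+ d) = pairN N alpha c + pairN N alpha d.
Proof. by rewrite /pairN -big_split; apply: eq_bigr => n _; rewrite mulrDr. Qed.

Lemma pairNB N alpha c d :
  pairN N alpha (c \- d) = pairN N alpha c - pairN N alpha d.
Proof. by rewrite /pairN -sumrB; apply: eq_bigr => n _; rewrite mulrBr. Qed.

Lemma pairNZ N alpha l c :
  pairN N alpha (fun n => l * c n) = l * pairN N alpha c.
Proof. by rewrite /pairN mulr_sumr; apply: eq_bigr => n _; rewrite mulrCA. Qed.

Lemma dconv0 a b : dconv a b 0 = 0.
Proof. by rewrite /dconv big_geq. Qed.

Lemma supp_le_dconv N a b : supp_le N a -> supp_le N b ->
  supp_le (N * N) (dconv a b).
Proof.
move=> aN bN n /orP[/eqP->|NNn]; first exact: dconv0.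
rewrite /dconv big_nat_cond big1 // => k /andP[/andP[k_gt0 _] kn].
have [kN|Nk] := leqP k N; last by rewrite aN ?mul0r // Nk orbT.
suff -> : b (n %/ k)%N = 0 by rewrite raddf0 mulr0.
apply: bN; apply/orP; right; rewrite ltnNge; apply: contraL NNn => qN.
by rewrite -leqNgt -(divnK kn) mulnC leq_mul.
Qed.

Lemma dconvE N a b j : supp_le N a -> supp_le N b -> (0 < j)%N ->
  dconv a b j = \sum_(1 <= k < N.+1) \sum_(1 <= m < N.+1)
                  (if j == (k * m)%N then a k * (b m)^* else 0).
Proof.
move=> aN bN j_gt0; rewrite /dconv big_mkcond /=.
set G := fun k => if (k %| j)%N then a k * (b (j %/ k)%N)^* else 0.
rewrite -(@big_nat_widen0 _ G 1 j.+1 (maxn N j).+1); last first.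
  move=> k /andP[jk _]; rewrite /G; case: ifP => // /(dvdn_leq j_gt0).
  by rewrite leqNgt jk.
  by rewrite /= ltnS leq_maxr.
rewrite (@big_nat_widen0 _ G 1 N.+1 (maxn N j).+1); last first.
  by move=> k /andP[Nk _]; rewrite /G aN ?mul0r ?if_same // Nk orbT.
  by rewrite /= ltnS leq_maxl.
apply: eq_big_nat => k /andP[k_gt0 _]; rewrite /G.
case: ifP => kj; last first.
  by rewrite big1 // => m _; case: eqP => // jE; rewrite jE dvdn_mulr in kj.
rewrite (eq_bigr (fun m => if m == (j %/ k)%N then a k * (b m)^* else 0)).
  rewrite big_nat_eq1; case: ifP => // /negbT q_out.
  suff -> : b (j %/ k)%N = 0 by rewrite raddf0 mulr0.
  by apply: bN; rewrite negb_and -eqn0Ngt ltnS -ltnNge in q_out.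
move=> m _; congr (if _ then _ else _).
by rewrite -{1}(divnK kj) mulnC eqn_pmul2l // eq_sym.
Qed.

Lemma pairN_dconv N M alpha a b : supp_le N a -> supp_le N b ->
  (N * N <= M)%N -> pairN M alpha (dconv a b) = Mform alpha N a b.
Proof.
move=> aN bN NM; rewrite /pairN /Mform.
transitivity (\sum_(1 <= j < M.+1) \sum_(1 <= k < N.+1) \sum_(1 <= m < N.+1)
   (if j == (k * m)%N then alpha j * (a k * (b m)^*) else 0)).
  apply: eq_big_nat => j /andP[j_gt0 _]; rewrite (dconvE aN bN j_gt0) mulr_sumr.
  apply: eq_bigr => k _; rewrite mulr_sumr; apply: eq_bigr => m _.
  by case: ifP; rewrite ?mulr0.
rewrite exchange_big; apply: eq_big_nat => k /andP[k_gt0 kN].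
rewrite exchange_big; apply: eq_big_nat => m /andP[m_gt0 mN].
rewrite big_nat_eq1 muln_gt0 k_gt0 m_gt0 ltnS /= mulrC.
by rewrite (leq_trans _ NM) // leq_mul // -ltnS.
Qed.

Definition delta (n : nat) : nat -> C := fun m => if m == n then 1 else 0.

Lemma supp_le_delta n : (0 < n)%N -> supp_le n (delta n).
Proof.
move=> n_gt0 m; rewrite /delta; case: ifP => // /eqP ->.
by rewrite gtn_eqF ?ltnn.
Qed.

Lemma pairN_delta N alpha n : (0 < n <= N)%N -> pairN N alpha (delta n) = alpha n.
Proof.
move=> nN; rewrite /pairN (eq_bigr (fun m => if m == n then alpha m else 0)).
  by rewrite big_nat_eq1 ltnS nN.
by move=> m _; rewrite /delta; case: eqP => _; rewrite ?mulr1 ?mulr0.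
Qed.

Lemma dconv_delta1 c : c 0 = 0 -> dconv c (delta 1) = c.
Proof.
move=> c0; apply: boolp.funext => n; have [->|n_gt0] := posnP n.
  by rewrite dconv0 c0.
rewrite /dconv big_mkcond /=.
transitivity (\sum_(1 <= k < n.+1) (if k == n then c k else 0)); last first.
  by rewrite big_nat_eq1 ltnS leqnn n_gt0.
apply: eq_big_nat => k /andP[k_gt0 _]; rewrite /delta.
case: (k =P n) => [->|nk]; first by rewrite dvdnn divnn n_gt0 eqxx rmorph1 mulr1.
case: ifP => // kn; case: ifP => [/eqP q1|_]; last by rewrite raddf0 mulr0.
by case: nk; rewrite -(divnK kn) q1 mul1n.
Qed.

End Sequences.

Arguments delta {R} n.
Arguments supp_le_delta {R n}.

Section SpaceX.
Variable R : realType.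
Local Notation C := R[i].
Implicit Types (a b c : nat -> C) (alpha : nat -> C).

Lemma inXP c : inX c <-> finsupp c.
Proof.
split=> [[N [s [s_supp cE]]]|[N cN]].
  exists (N * N)%N => n nN; rewrite cE big_seq big1 // => p ps.
  by have [aN bN] := s_supp p ps; apply: (supp_le_dconv aN bN).
exists N.+1, [:: (c, delta 1)]; split=> [p|n].
  rewrite inE => /eqP-> /=; split; first exact: supp_leW cN.
  by apply: (supp_leW _ (supp_le_delta (ltn0Sn 0))).
by rewrite big_seq1 dconv_delta1 //; apply: cN.
Qed.

Lemma inX_supp_le N c : supp_le N c -> inX c.
Proof. by move=> cN; apply/inXP; exists N. Qed.

Lemma normX_has_inf c : inX c -> has_inf
  [set r : R | exists N s, rep c N s /\ r = \sum_(p <- s) l2N N p.1 * l2N N p.2].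
Proof.
move=> [N [s cNs]]; split; first by exists (\sum_(p <- s) l2N N p.1 * l2N N p.2), N, s.
exists 0 => _ [M [t [_ ->]]].
by apply: sumr_ge0 => p _; apply: mulr_ge0; apply: sqrtr_ge0.
Qed.

Lemma normX_le c N s : rep c N s ->
  normX c <= \sum_(p <- s) l2N N p.1 * l2N N p.2.
Proof. by move=> cNs; apply: (ge_inf (normX_has_inf _).2); exists N, s. Qed.

Lemma normX_dconv_le N a b : supp_le N a -> supp_le N b ->
  normX (dconv a b) <= l2N N a * l2N N b.
Proof.
move=> aN bN; have ab_rep : rep (dconv a b) N [:: (a, b)].
  by split=> [p|n]; [rewrite inE => /eqP-> | rewrite big_seq1].
by have := normX_le ab_rep; rewrite big_seq1.
Qed.

Lemma pairN_le_normX alpha K N c : 0 <= K -> Mbound alpha K -> inX c ->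
  supp_le N c -> normR (pairN N alpha c) <= K * normX c.
Proof.
move=> K_ge0 alphaK cX cN; apply: ler_pM_inf (normX_has_inf cX) _ => //.
move=> _ [M [s [[s_supp cE] ->]]].
have pairE : pairN (maxn N (M * M)) alpha c = \sum_(p <- s) Mform alpha M p.1 p.2.
  rewrite /pairN; under eq_bigr do rewrite cE mulr_sumr.
  rewrite exchange_big /= !big_seq; apply: eq_bigr => p ps.
  have [aM bM] := s_supp p ps.
  by rewrite -(pairN_dconv _ aM bM (leq_maxr N _)).
rewrite -lecR -normRE -(pairN_widen _ (leq_maxl N (M * M)) cN) pairE.
apply: le_trans (ler_norm_sum _ _ _) _.
rewrite mulr_sumr rmorph_sum /= !big_seq; apply: ler_sum => p ps.
by have [aM bM] := s_supp p ps; rewrite mulrA alphaK.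
Qed.

End SpaceX.

Section McShane.
Variables (R : realType) (Y : normedZmodType R[i]).
Local Open Scope classical_set_scope.
Variables (I : Type) (P : set I) (pt : I -> Y) (v : I -> R) (K : R).
Hypotheses (K_ge0 : 0 <= K) (P_neq0 : P !=set0).
Hypothesis v_lip : forall i j, P i -> P j -> v i - v j <= K * normR (pt i - pt j).

Definition mcshane (y : Y) : R := sup [set v i - K * normR (y - pt i) | i in P].

Lemma mcshane_bounds y i : P i ->
  v i - K * normR (y - pt i) <= mcshane y <= v i + K * normR (y - pt i).
Proof.
have below j k : P j -> P k ->
    v k - K * normR (y - pt k) <= v j + K * normR (y - pt j).
  move=> Pj Pk; have := v_lip Pk Pj.
  have := ler_wpM2l K_ge0 (distR_triangle (pt k) y (pt j)).
  rewrite [normR (pt k - y)]distRC mulrDr; lra.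
move=> Pi; apply/andP; split.
  apply: ub_le_sup; last by exists i.
  by exists (v i + K * normR (y - pt i)) => _ [k Pk <-]; apply: below.
have [i0 Pi0] := P_neq0.
apply: ge_sup; first by exists (v i0 - K * normR (y - pt i0)), i0.
by move=> _ [k Pk <-]; apply: below.
Qed.

End McShane.

Section DenseExtension.
Variables (R : realType) (Y : normedModType R[i]).
Local Notation C := R[i].
Local Open Scope complex_scope.
Variables (I : Type) (P : set I) (pt : I -> Y) (f : I -> C) (K : R).
Hypothesis K_ge0 : 0 <= K.
Hypothesis f_bounded : forall i, P i -> normR (f i) <= K * normR (pt i).
Hypothesis P_sub : forall i j, P i -> P j ->
  exists2 k, P k & pt k = pt i - pt j /\ f k = f i - f j.
Hypothesis P_scale : forall l i, P i ->
  exists2 k, P k & pt k = l *: pt i /\ f k = l * f i.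
Hypothesis pt_dense : forall y e, 0 < e -> exists2 i, P i & normR (y - pt i) < e.

Lemma f_lipschitz i j : P i -> P j ->
  normR (f i - f j) <= K * normR (pt i - pt j).
Proof. by move=> Pi Pj; have [k Pk [<- <-]] := P_sub Pi Pj; apply: f_bounded. Qed.

Definition approx (L : R) (y : Y) (z : C) :=
  forall i, P i -> normR (z - f i) <= L * normR (y - pt i).

Lemma approx_unique L1 L2 y z1 z2 : 0 <= L1 -> 0 <= L2 ->
  approx L1 y z1 -> approx L2 y z2 -> z1 = z2.
Proof.
move=> L1_ge0 L2_ge0 yz1 yz2; apply/eqP; rewrite -subr_eq0; apply/eqP.
apply: normR_eq0; apply: le_anti; rewrite normR_ge0 andbT.
apply: (ler_addgt0_scaled (addr_ge0 L1_ge0 L2_ge0)) => e e_gt0.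
have [i Pi /ltW yi_le] := pt_dense y e_gt0.
have -> : z1 - z2 = (z1 - f i) - (z2 - f i) by rewrite opprB addrA subrK.
apply: le_trans (normRD _ _) _; rewrite normRN add0r mulrDl.
apply: lerD; [apply: le_trans (yz1 i Pi) _ | apply: le_trans (yz2 i Pi) _];
  exact: ler_wpM2l.
Qed.

Lemma approx_pt i : P i -> approx K (pt i) (f i).
Proof. by move=> Pi j Pj; apply: f_lipschitz. Qed.

Lemma approxD L y1 y2 z1 z2 : 0 <= L ->
  approx L y1 z1 -> approx L y2 z2 -> approx L (y1 + y2) (z1 + z2).
Proof.
move=> L_ge0 yz1 yz2 i Pi; apply: (ler_addgt0_scaled (addr_ge0 L_ge0 L_ge0)).
move=> e e_gt0; have [j Pj /ltW y1j_le] := pt_dense y1 e_gt0.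
have [k Pk [ptk fk]] := P_sub Pi Pj.
have -> : z1 + z2 - f i = (z1 - f j) + (z2 - f k).
  by rewrite fk opprB [RHS]addrCA subrKA addrA [z2 + z1]addrC.
have y2k_le : normR (y2 - pt k) <= normR (y1 + y2 - pt i) + normR (y1 - pt j).
  have -> : y2 - pt k = (y1 + y2 - pt i) - (y1 - pt j).
    by rewrite ptk !opprB [RHS]addrC [RHS]addrA subrKA addrA [y2 + _]addrC.
  by rewrite -(normRN (y1 - pt j)) normRD.
apply: le_trans (normRD _ _) _; apply: le_trans (lerD (yz1 j Pj) (yz2 k Pk)) _.
have := ler_wpM2l L_ge0 y1j_le; have := ler_wpM2l L_ge0 y2k_le.
rewrite mulrDr mulrDl; lra.
Qed.

Lemma approxZ L l y z : l != 0 -> approx L y z -> approx L (l *: y) (l * z).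
Proof.
move=> l_neq0 yz i Pi; have [k Pk [ptk fk]] := P_scale l^-1 Pi.
have -> : l * z - f i = l * (z - f k) by rewrite fk mulrBr mulrA divff ?mul1r.
have -> : l *: y - pt i = l *: (y - pt k).
  by rewrite ptk scalerBr scalerA divff ?scale1r.
by rewrite normRM normRZ mulrCA ler_wpM2l ?normR_ge0 ?yz.
Qed.

Definition ext (y : Y) : C :=
  mcshane P pt (fun i => complex.Re (f i)) K y +i*
  mcshane P pt (fun i => complex.Im (f i)) K y.

Lemma ext_approx y : approx (K + K) y (ext y).
Proof.
have P_neq0 : (P !=set0)%classic by have [i Pi _] := pt_dense 0 ltr01; exists i.
have ReIm_lip (g : C -> R) : {morph g : x y / x - y} -> (forall w, `|g w| <= normR w) ->
    forall i j, P i -> P j -> g (f i) - g (f j) <= K * normR (pt i - pt j).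
  move=> gB g_le i j Pi Pj; rewrite -gB.
  exact: le_trans (ler_norm _) (le_trans (g_le _) (f_lipschitz Pi Pj)).
move=> i Pi; apply: le_trans (normR_le_ReIm _) _; rewrite !raddfB /= mulrDl.
have /andP[] := mcshane_bounds K_ge0 P_neq0 (ReIm_lip _ (raddfB _) (@normR_Re_le _)) y Pi.
have /andP[] := mcshane_bounds K_ge0 P_neq0 (ReIm_lip _ (raddfB _) (@normR_Im_le _)) y Pi.
rewrite /ext; set a := mcshane _ _ _ _ y; set b := mcshane _ _ _ _ y => /= *.
by apply: lerD; rewrite ler_norml; apply/andP; split; lra.
Qed.

Let KK_ge0 : 0 <= K + K := addr_ge0 K_ge0 K_ge0.

Lemma ext_pt i : P i -> ext (pt i) = f i.
Proof. by move=> Pi; apply: approx_unique KK_ge0 K_ge0 (ext_approx _) (approx_pt Pi). Qed.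

Lemma extD y1 y2 : ext (y1 + y2) = ext y1 + ext y2.
Proof.
apply: approx_unique KK_ge0 KK_ge0 (ext_approx _) _.
exact: approxD KK_ge0 (ext_approx y1) (ext_approx y2).
Qed.

Lemma extZ l y : ext (l *: y) = l * ext y.
Proof.
have [->|l_neq0] := eqVneq l 0; last first.
  exact: approx_unique KK_ge0 KK_ge0 (ext_approx _) (approxZ l_neq0 (ext_approx y)).
rewrite scale0r mul0r; apply: approx_unique KK_ge0 K_ge0 (ext_approx _) _.
by move=> i Pi; rewrite !sub0r !normRN f_bounded.
Qed.

Lemma ext_bounded K' : 0 <= K' ->
  (forall i, P i -> normR (f i) <= K' * normR (pt i)) ->
  forall y, normR (ext y) <= K' * normR y.
Proof.
move=> K'_ge0 fK' y; apply: (ler_addgt0_scaled (addr_ge0 KK_ge0 K'_ge0)).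
move=> e e_gt0; have [i Pi /ltW yi_le] := pt_dense y e_gt0.
have ext_le : normR (ext y) <= normR (ext y - f i) + normR (f i).
  by rewrite -{1}(subrK (f i) (ext y)) normRD.
have pt_le : normR (pt i) <= normR y + normR (y - pt i).
  have := normRD y (- (y - pt i)).
  by rewrite opprB (addrC y) subrK [normR (pt i - y)]distRC.
have := ext_approx y Pi; have := fK' i Pi.
have := ler_wpM2l K'_ge0 pt_le; have := ler_wpM2l K'_ge0 yi_le.
have := ler_wpM2l KK_ge0 yi_le; rewrite !mulrDr !mulrDl; lra.
Qed.

Lemma ext_unique (psi : Y -> C) (L : R) :
  (forall x y, psi (x + y) = psi x + psi y) ->
  (forall y, normR (psi y) <= L * normR y) ->
  (forall i, P i -> psi (pt i) = f i) -> psi = ext.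
Proof.
move=> psiD psiL psi_pt; apply: boolp.funext => y.
have psiB x1 x2 : psi (x1 - x2) = psi x1 - psi x2.
  by apply/eqP; rewrite eq_sym subr_eq -psiD subrK.
have L'_ge0 : 0 <= Num.max L 0 by rewrite le_max lexx orbT.
apply: approx_unique L'_ge0 KK_ge0 _ (ext_approx y) => i Pi.
rewrite -psi_pt // -psiB; apply: le_trans (psiL _) _.
by rewrite ler_wpM2r ?normR_ge0 // le_max lexx.
Qed.

End DenseExtension.

Section Completion.
Variables (R : realType) (Y : completeNormedModType R[i]).
Variable iota : (nat -> R[i]) -> Y.
Hypothesis iotaP : is_completion iota.
Local Notation C := R[i].
Implicit Types (c d : nat -> C) (alpha : nat -> C) (phi : Y -> C).

Lemma iotaD N c d : supp_le N c -> supp_le N d -> iota (c \+ d) = iota c + iota d.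
Proof. by move=> cN dN; apply: iotaP.1; [exact: inX_supp_le cN | exact: inX_supp_le dN]. Qed.

Lemma iotaZ N l c : supp_le N c -> iota (fun n => l * c n) = l *: iota c.
Proof. by move=> cN; apply: iotaP.2.1; apply: inX_supp_le cN. Qed.

Lemma iotaB N c d : supp_le N c -> supp_le N d -> iota (c \- d) = iota c - iota d.
Proof.
move=> cN dN; have -> : c \- d = c \+ (fun n => -1 * d n).
  by apply: boolp.funext => n /=; rewrite mulN1r.
by rewrite (iotaD cN (supp_leZ _ dN)) (iotaZ _ dN) scaleN1r.
Qed.

Lemma normR_iota c : inX c -> normR (iota c) = normX c.
Proof. by move=> cX; apply: complexI; rewrite -normRE iotaP.2.2.1. Qed.

(* An index (c, N) is a point of X together with a bound N on its support, so
   that [pairN N alpha c] is the pairing (alpha, c). *)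
Definition supported (i : (nat -> C) * nat) : Prop := supp_le i.2 i.1.

Definition pairing alpha (i : (nat -> C) * nat) : C := pairN i.2 alpha i.1.

Definition J alpha (K : R) : Y -> C :=
  ext supported (fun i => iota i.1) (pairing alpha) K.

Definition extends_pairN alpha phi : Prop :=
  forall c N, inX c -> supp_le N c -> phi (iota c) = pairN N alpha c.

Lemma supported_sub alpha i j : supported i -> supported j ->
  exists2 k, supported k & iota k.1 = iota i.1 - iota j.1 /\
    pairing alpha k = pairing alpha i - pairing alpha j.
Proof.
case: i j => [c N] [d M] /= cN dM.
have cNM := supp_leW (leq_maxl N M) cN; have dNM := supp_leW (leq_maxr N M) dM.
exists (c \- d, maxn N M); first exact: supp_leB.
rewrite /pairing /= (iotaB cNM dNM) pairNB.
by rewrite (pairN_widen _ (leq_maxl N M) cN) (pairN_widen _ (leq_maxr N M) dM).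
Qed.

Lemma supported_scale alpha l i : supported i ->
  exists2 k, supported k & iota k.1 = l *: iota i.1 /\
    pairing alpha k = l * pairing alpha i.
Proof.
case: i => [c N] /= cN; exists ((fun n => l * c n), N); first exact: supp_leZ.
by rewrite /pairing /= (iotaZ _ cN) pairNZ.
Qed.

Lemma supported_dense y e : 0 < e ->
  exists2 i, supported i & normR (y - iota i.1) < e.
Proof.
move=> e_gt0; have [c [/inXP[N cN] yc]] := iotaP.2.2.2 y e e_gt0.
by exists (c, N) => //; rewrite -ltcR -normRE.
Qed.

Lemma pairing_bounded alpha K : 0 <= K -> Mbound alpha K ->
  forall i, supported i -> normR (pairing alpha i) <= K * normR (iota i.1).
Proof.
move=> K_ge0 alphaK [c N] /= cN; have cX := inX_supp_le cN.
by rewrite normR_iota //; apply: pairN_le_normX.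
Qed.

Section Pairing.
Variables (alpha : nat -> C) (K : R).
Hypotheses (K_ge0 : 0 <= K) (alphaK : Mbound alpha K).
Let alpha_bounded := pairing_bounded K_ge0 alphaK.

Lemma J_iota : extends_pairN alpha (J alpha K).
Proof.
move=> c N _ cN; rewrite -[pairN N alpha c]/(pairing alpha (c, N)).
exact: (ext_pt K_ge0 alpha_bounded (supported_sub alpha) supported_dense
  (i := (c, N))).
Qed.

Lemma J_bounded K' : 0 <= K' -> Mbound alpha K' ->
  forall y, normR (J alpha K y) <= K' * normR y.
Proof.
move=> K'_ge0 alphaK'.
apply: (ext_bounded K_ge0 alpha_bounded (supported_sub alpha) supported_dense K'_ge0).
exact: pairing_bounded.
Qed.

Lemma J_functional : bdd_functional (J alpha K).
Proof.
split; first exact: (extD K_ge0 alpha_bounded (supported_sub alpha) supported_dense).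
split; first exact: (extZ K_ge0 alpha_bounded (supported_sub alpha)
  (supported_scale alpha) supported_dense).
by exists K => y; rewrite lec_normR J_bounded.
Qed.

Lemma J_unique psi : bdd_functional psi -> extends_pairN alpha psi ->
  psi = J alpha K.
Proof.
move=> [psiD [_ [L psiL]]] psi_alpha.
apply: (ext_unique K_ge0 alpha_bounded (supported_sub alpha) supported_dense psiD).
  by move=> y; rewrite -lec_normR.
by case=> [c N] /= cN; apply: psi_alpha (inX_supp_le cN) cN.
Qed.

End Pairing.

Lemma Mbound_of_functional alpha phi K : extends_pairN alpha phi -> 0 <= K ->
  (forall y, normR (phi y) <= K * normR y) -> Mbound alpha K.
Proof.
move=> phi_alpha K_ge0 phiK N a b aN bN.
have abX := inX_supp_le (supp_le_dconv aN bN).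
rewrite -(pairN_dconv _ aN bN (leqnn _)) -(phi_alpha _ _ abX (supp_le_dconv aN bN)).
rewrite (normRE (phi _)) lecR (le_trans (phiK _)) // normR_iota // -mulrA.
by rewrite ler_wpM2l // normX_dconv_le.
Qed.

Lemma dual_norm_J alpha K : 0 <= K -> Mbound alpha K ->
  dual_norm (J alpha K) = Mnorm alpha.
Proof.
move=> K_ge0 alphaK; congr inf; apply: boolp.funext => K'.
apply: boolp.propext; split=> -[K'_ge0 K'_bound]; split=> //.
  apply: Mbound_of_functional (J_iota K_ge0 alphaK) K'_ge0 _ => y.
  by rewrite -lec_normR.
by move=> y; rewrite lec_normR J_bounded.
Qed.

Lemma functional_extends_pairN phi : bdd_functional phi ->
  extends_pairN (fun n => phi (iota (delta n))) phi.
Proof.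
move=> [phiD [phiZ _]] c N _; set alpha := fun n => _.
elim: N c => [|N IHN] c cN.
  have -> : c = fun n => 0 * c n.
    by apply: boolp.funext => -[|n]; rewrite mul0r cN.
  by rewrite (iotaZ _ cN) phiZ mul0r /pairN big_geq.
set c' := fun m => if m == N.+1 then 0 else c m.
have c'N : supp_le N c'.
  move=> m mN; rewrite /c'; case: eqP => // m_neq; apply: cN.
  case/orP: mN => [-> // | Nm]; rewrite ltn_neqAle Nm andbT.
  by apply/orP; right; apply/eqP => /esym.
have deltaN := @supp_le_delta R N.+1 (ltn0Sn N).
have cE : c = c' \+ (fun m => c N.+1 * delta N.+1 m).
  apply: boolp.funext => m; rewrite /c' /delta /=.
  by case: eqP => [->|_]; rewrite ?add0r ?mulr1 // mulr0 addr0.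
rewrite [in LHS]cE (iotaD (supp_leW (leqnSn N) c'N) (supp_leZ _ deltaN)).
rewrite phiD (iotaZ _ deltaN) phiZ IHN // {2}cE pairND pairNZ.
by rewrite (pairN_widen _ (leqnSn N) c'N) pairN_delta /=.
Qed.

End Completion.

Lemma bdd_functional_bound (R : realType) (Y : normedModType R[i]) (phi : Y -> R[i]) :
  bdd_functional phi ->
  exists2 L, 0 <= L & forall y, normR (phi y) <= L * normR y.
Proof.
move=> [_ [_ [L phiL]]]; exists (Num.max L 0); first by rewrite le_max lexx orbT.
move=> y; rewrite -lec_normR (le_trans (phiL y)) // ler_wpM2r //.
by rewrite lecR le_max lexx.
Qed.

Lemma Mbound_ge0 (R : realType) (alpha : nat -> R[i]) :
  inM alpha -> exists2 K, 0 <= K & Mbound alpha K.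
Proof.
move=> [K alphaK]; exists (Num.max K 0); first by rewrite le_max lexx orbT.
move=> N a b aN bN; apply: le_trans (alphaK N a b aN bN) _; rewrite lecR.
by rewrite -!mulrA ler_wpM2r ?mulr_ge0 ?sqrtr_ge0 // le_max lexx.
Qed.

Unset Implicit Arguments.

Theorem lemma7 (R : realType) (Y : completeNormedModType R[i])
    (iota : (nat -> R[i]) -> Y) :
  is_completion iota ->
  (* for every m = M(alpha) in \mathcal M, Jm extends (uniquely) to a bounded
     linear functional on the completion, of norm ||M(alpha)|| *)
  (forall alpha : nat -> R[i], inM alpha ->
     exists phi : Y -> R[i],
       bdd_functional phi /\
       (forall (c : nat -> R[i]) (N : nat), inX c -> supp_le N c ->
          phi (iota c) = pairN N alpha c) /\
       (forall psi : Y -> R[i], bdd_functional psi ->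
          (forall (c : nat -> R[i]) (N : nat), inX c -> supp_le N c ->
             psi (iota c) = pairN N alpha c) -> psi = phi) /\
       dual_norm phi = Mnorm alpha) /\
  (* J is onto the dual of the completion *)
  (forall phi : Y -> R[i], bdd_functional phi ->
     exists alpha : nat -> R[i], inM alpha /\
       forall (c : nat -> R[i]) (N : nat), inX c -> supp_le N c ->
         phi (iota c) = pairN N alpha c).
Proof.
move=> iotaP; split=> [alpha /Mbound_ge0[K K_ge0 alphaK] | phi phiP].
  exists (J iota alpha K); split; first exact (J_functional iotaP K_ge0 alphaK).
  split; first exact (J_iota iotaP K_ge0 alphaK).
  split; first exact (J_unique iotaP K_ge0 alphaK).
  exact (dual_norm_J iotaP K_ge0 alphaK).
have [L L_ge0 phiL] := bdd_functional_bound phiP.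
have phi_alpha := functional_extends_pairN iotaP phiP.
exists (fun n => phi (iota (delta n))); split; last exact: phi_alpha.
by exists L; exact (Mbound_of_functional iotaP phi_alpha L_ge0 phiL).
Qed.
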